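(* Let $d,m\ge 1$ and let $\mathbf{G}\in\mathbb{R}^{dm\times dm}$ be a symmetric matrix satisfying: (P1) $\mathbf{G}$ is positive semidefinite; (P2) $\mathrm{rank}(\mathbf{G})\le d$; (P3) $\mathbf{G}_{ii}=\mathbf{I}$ for all $i\in\{1,\ldots,m\}$; (P4) $\mathbf{G}_{i,i+1}\in\mathbb{SO}(d)$ for all $i\in\{1,\ldots,m-1\}$. Then there exist $\mathbf{R}_1,\ldots,\mathbf{R}_m\in\mathbb{SO}(d)$ such that $\mathbf{G}_{ij}=\mathbf{R}_i^\top\mathbf{R}_j$ for all $i,j\in\{1,\ldots,m\}$.
   Context: $\mathbb{SO}(d)=\{\mathbf{R}\in\mathbb{R}^{d\times d}:\mathbf{R}^\top\mathbf{R}=\mathbf{I},\ \det\mathbf{R}=1\}$. For a matrix $\mathbf{X}\in\mathbb{R}^{dm\times dm}$, $\mathbf{X}_{ij}\in\mathbb{R}^{d\times d}$ denotes its $(i,j)$-th $d\times d$ block, i.e. $\mathbf{X}_{ij}(p,q)=\mathbf{X}((i-1)d+p,(j-1)d+q)$ for $p,q\in\{1,\ldots,d\}$. $\mathbf{I}$ is the $d\times d$ identity. *)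

From HB Require Import structures.
From mathcomp Require Import all_boot all_order all_algebra.
From mathcomp Require Import reals zify.
Set Implicit Arguments. Unset Strict Implicit. Unset Printing Implicit Defensive.
Import Order.TTheory GRing.Theory Num.Theory.
Local Open Scope ring_scope.

(* index (i-1)d + p  (0-based: i*d + p) of the big matrix *)
Lemma blk_idx_proof (d m : nat) (i : 'I_m) (p : 'I_d) : (i * d + p < d * m)%N.
Proof.
case: i => i /= Hi; case: p => p /= Hp.
have H : (i.+1 * d <= m * d)%N by rewrite leq_mul2r Hi orbT.
rewrite [(d * m)%N]mulnC; apply: leq_trans H.
rewrite mulSn; lia.
Qed.

Definition blk_idx (d m : nat) (i : 'I_m) (p : 'I_d) : 'I_(d * m) :=
  Ordinal (blk_idx_proof i p).

Definition block {R : Type} (d m : nat) (X : 'M[R]_(d * m)) (i j : 'I_m)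
  : 'M[R]_d := \matrix_(p < d, q < d) X (blk_idx i p) (blk_idx j q).

Definition is_psd {R : realType} (n : nat) (X : 'M[R]_n) : Prop :=
  forall x : 'cV[R]_n, 0 <= (x^T *m X *m x) 0 0.

Definition is_SO {R : realType} (d : nat) (Q : 'M[R]_d) : Prop :=
  Q^T *m Q = 1%:M /\ \det Q = 1.

From HB Require Import structures.
From mathcomp Require Import all_boot all_order all_algebra.
From mathcomp Require Import reals.
Import Order.TTheory GRing.Theory Num.Theory.
Local Open Scope ring_scope.

(* A matrix A of rank at most d with an invertible d x d submatrix S factors
   as A = C S^-1 U, where C and U are the columns and rows of A through S.
   With S = G_11 = I this gives G_ij = G_i1 G_1j = G_1i^T G_1j, so R_j := G_1j
   works: R_j^T R_j = G_jj = I, and (P4) gives det R_i * det R_(i+1) = 1, so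
   inductively every det R_j equals det G_11 = 1. *)

Lemma skeleton_decomposition {F : fieldType} {n k d : nat} {A : 'M[F]_(n, k)}
    {f : 'I_d -> 'I_n} {g : 'I_d -> 'I_k} :
  mxsub f g A \in unitmx -> (\rank A <= d)%N ->
  A = colsub g A *m invmx (mxsub f g A) *m rowsub f A.
Proof.
move=> S_unit rankA; set S := mxsub f g A in S_unit *; set U := rowsub f A.
have US : colsub g U = S by rewrite /S [RHS]mxsubcr.
have rankU : \rank U = d.
  apply/eqP; rewrite eqn_leq rank_leq_row -{1}(mxrank_unit S_unit) -US.
  by rewrite -[X in colsub g X]mulmx1 -mulmx_colsub mxrankM_maxl.
have UA : (U <= A)%MS by apply: rowsub_sub.
have AU : (A <= U)%MS.
  have [_ <-] := mxrank_leqif_sup UA.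
  by rewrite eqn_leq (mxrankS UA) rankU rankA.
set X := A *m pinvmx U.
have AXU : A = X *m U by rewrite mulmxKpV.
have -> : colsub g A = X *m S by rewrite {1}AXU -mulmx_colsub US.
by rewrite mulmxK.
Qed.

Lemma block_mxsub (T : Type) (d m : nat) (X : 'M[T]_(d * m)) (i j : 'I_m) :
  block X i j = mxsub (blk_idx i) (blk_idx j) X.
Proof. by apply/matrixP => p q; rewrite !mxE. Qed.

Lemma block_trmx (T : Type) (d m : nat) (X : 'M[T]_(d * m)) (i j : 'I_m) :
  block X^T i j = (block X j i)^T.
Proof. by rewrite !block_mxsub trmx_mxsub. Qed.

Lemma block_mul_pivot {F : fieldType} {d m : nat} {G : 'M[F]_(d * m)}
    {k : 'I_m} :
  block G k k = 1%:M -> (\rank G <= d)%N ->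
  forall i j, block G i j = block G i k *m block G k j.
Proof.
rewrite block_mxsub => Gkk rankG i j.
have Gkk_unit : mxsub (blk_idx k) (blk_idx k) G \in unitmx.
  by rewrite Gkk unitmx1.
rewrite !block_mxsub {1}(skeleton_decomposition Gkk_unit rankG).
by rewrite Gkk invmx1 mulmx1 mxsub_mul -mxsubrc -mxsubcr.
Qed.

Lemma ord_succ_ind (m : nat) (P : 'I_m -> Prop) (i0 : 'I_m) :
  val i0 = 0%N -> P i0 ->
  (forall i j : 'I_m, val j = (val i).+1 -> P i -> P j) ->
  forall j, P j.
Proof.
move=> i00 P0 PS j; elim: {j}(val j) {-2}j (erefl (val j)) => [|n IH] j jn.
  by have -> : j = i0 by apply: val_inj; rewrite jn i00.
have n_lt_m : (n < m)%N by apply: ltnW; rewrite -jn ltn_ord.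
by apply: (PS (Ordinal n_lt_m)) => //; apply: IH.
Qed.

Theorem theorem1 (R : realType) (d m : nat) (G : 'M[R]_(d * m)) :
  (0 < d)%N -> (0 < m)%N ->
  G^T = G ->
  is_psd G ->
  (\rank G <= d)%N ->
  (forall i : 'I_m, block G i i = 1%:M) ->
  (forall i j : 'I_m, val j = (val i).+1 -> is_SO (block G i j)) ->
  exists Rs : 'I_m -> 'M[R]_d,
    (forall i, is_SO (Rs i)) /\
    (forall i j : 'I_m, block G i j = (Rs i)^T *m Rs j).
Proof.
move=> _ m_gt0 G_sym _ G_rank G_diag G_SO.
pose k : 'I_m := Ordinal m_gt0.
pose Rs j := block G k j.
have G_gram i j : block G i j = (Rs i)^T *m Rs j.
  by rewrite (block_mul_pivot (G_diag k) G_rank) -block_trmx G_sym.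
exists Rs; split; last exact: G_gram.
move=> j; split; first by rewrite -G_gram G_diag.
apply: (@ord_succ_ind m (fun j => \det (Rs j) = 1) k) => // [|i l il deti].
  by rewrite /Rs G_diag det1.
have [_] := G_SO i l il.
by rewrite G_gram det_mulmx det_tr deti mul1r.
Qed.
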